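(* Let $e_1,e_2$ be a basis of $\mathbb{Z}^2$. Up to isomorphism, the smooth toric varieties admitting a proper birational toric morphism to $\mathbb{A}^2$ and having nef anticanonical divisor are $\mathbb{A}^2$ and the varieties $Z_m$ ($m\ge1$), where $Z_m$ is the toric variety whose fan has maximal cones $\mathrm{cone}(e_1,e_1+e_2)$, $\mathrm{cone}(e_1+e_2,e_1+2e_2)$, $\dots$, $\mathrm{cone}(e_1+(m-1)e_2,e_1+me_2)$, $\mathrm{cone}(e_1+me_2,e_2)$.
   Context: $\mathbb{A}^2$ is the toric variety with fan $\mathrm{cone}(e_1,e_2)$ and its faces; toric varieties birationally proper over $\mathbb{A}^2$ correspond to fans subdividing $\mathrm{cone}(e_1,e_2)$. *)

(* Combinatorial (toric-dictionary) encoding of smooth toric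
   surfaces that are proper and birational over A^2 = X(cone(e1,e2)). *)
From mathcomp Require Import all_boot all_order all_algebra.
Set Implicit Arguments. Unset Strict Implicit. Unset Printing Implicit Defensive.
Import Order.TTheory GRing.Theory Num.Theory.
Local Open Scope ring_scope.

Definition vec := (int * int)%type.
Definition e1 : vec := (1, 0).
Definition e2 : vec := (0, 1).
Definition det2 (u v : vec) : int := u.1 * v.2 - u.2 * v.1.

(* A fan subdividing cone(e1,e2) (i.e. a toric variety with a proper birational
   toric morphism to A^2) is given by its rays listed counterclockwise
   s = [v_0 = e1; v_1; ...; v_n = e2], all in the quadrant, with maximal cones
   cone(v_i, v_{i+1}).  Smoothness: each (v_i, v_{i+1}) is a Z-basis
   (positively oriented: det = 1). *)
Definition ray (s : seq vec) (i : nat) : vec := nth (0, 0) s i.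

Definition smooth_quadrant_fan (s : seq vec) : Prop :=
  [/\ (1 < size s)%N,
      ray s 0 = e1,
      ray s (size s).-1 = e2,
      (forall i, (i < size s)%N -> 0 <= (ray s i).1 /\ 0 <= (ray s i).2) &
      (forall i, (i.+1 < size s)%N -> det2 (ray s i) (ray s i.+1) = 1)].

Definition maxcone (s : seq vec) (u v : vec) : Prop :=
  exists i, (i.+1 < size s)%N /\
    ((u = ray s i /\ v = ray s i.+1) \/ (u = ray s i.+1 /\ v = ray s i)).

(* isomorphism of toric varieties = lattice automorphism carrying the fan
   onto the other fan (for 2-dim fans determined by the maximal cones) *)
Definition lin (a b c d : int) (v : vec) : vec :=
  (a * v.1 + b * v.2, c * v.1 + d * v.2).

Definition toric_iso (s t : seq vec) : Prop :=
  exists a b c d : int,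
    (a * d - b * c = 1 \/ a * d - b * c = -1) /\
    forall u v, maxcone s u v <-> maxcone t (lin a b c d u) (lin a b c d v).

(* For an interior ray v_i
   (0 < i < n) the divisor D_i is a complete curve; v_{i-1} + v_{i+1} = a_i v_i
   with a_i = det2 v_{i-1} v_{i+1} (as det2 v_{i-1} v_i = 1), and D_i^2 = -a_i,
   D_i.D_j = 1 if |i-j| = 1, and 0 otherwise. *)
Definition selfint_coeff (s : seq vec) (i : nat) : int :=
  det2 (ray s i.-1) (ray s i.+1).

Definition inter (s : seq vec) (j i : nat) : int :=
  if j == i then - selfint_coeff s i
  else if (j == i.+1) || (i == j.+1) then 1 else 0.

(* (-K_X) . D_i  with  -K_X = sum of all torus-invariant prime divisors *)
Definition anticanonical_dot (s : seq vec) (i : nat) : int :=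
  \sum_(j < size s) inter s j i.

(* -K_X nef: nonnegative on every complete torus-invariant curve, i.e. on the
   D_i for interior rays (D_0, D_n are affine lines, not complete). *)
Definition nef_anticanonical (s : seq vec) : Prop :=
  forall i, (0 < i)%N -> (i.+1 < size s)%N -> 0 <= anticanonical_dot s i.

Definition fanA2 : seq vec := [:: e1; e2].
Definition fanZ (m : nat) : seq vec :=
  e1 :: [seq ((1 : int), (k%:Z : int)) | k <- iota 1 m] ++ [:: e2].

From mathcomp Require Import all_boot all_order all_algebra.
From mathcomp Require Import zify ring lra.

(* Write the rays of the fan as v_0 = e1, ..., v_n = e2.  Consecutive rays are
   lattice bases, hence v_(i-1) + v_(i+1) = a_i v_i with a_i = det(v_(i-1), v_(i+1)),
   which is positive because the rays turn counterclockwise inside the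
   quadrant, and (-K).D_i = 2 - a_i: nefness means that every a_i is 1 or 2.
   Along a run of 2's the rays form an arithmetic progression, and a 1 at p
   turns the step into -v_(p-1).  A second 1 would then produce a ray equal to
   -v_(p-1), outside the quadrant, and without any 1 the rays could not reach
   e2 unless n = 1 (the fan of A^2).  Reaching e2 after the single 1 forces it
   to sit at the first or at the last interior ray; the first case is Z_m with
   the coordinates swapped, the second Z_m itself.  Conversely a lattice
   isomorphism of fans transports the relations v_(i-1) + v_(i+1) = a_i v_i, so
   nefness is an isomorphism invariant. *)

Set Implicit Arguments.
Unset Strict Implicit.
Unset Printing Implicit Defensive.

Import Order.TTheory GRing.Theory Num.Theory.
Local Open Scope ring_scope.

Lemma vecP (u w : vec) : u.1 = w.1 -> u.2 = w.2 -> u = w.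
Proof. by case: u w => [? ?] [? ?] /= -> ->. Qed.

Lemma fst_mulrz (u : vec) (m : int) : (u *~ m).1 = u.1 * m.
Proof. by rewrite (raddfMz fst) mulrzz. Qed.

Lemma snd_mulrz (u : vec) (m : int) : (u *~ m).2 = u.2 * m.
Proof. by rewrite (raddfMz snd) mulrzz. Qed.

Lemma det2_cramer (u v w : vec) : v *~ det2 u w = u *~ det2 v w + w *~ det2 u v.
Proof.
by apply: vecP; rewrite /= ?fst_mulrz ?snd_mulrz /det2; ring.
Qed.

Lemma mulrn_vec (u : vec) t : u *+ t = (u.1 * t%:Z, u.2 * t%:Z).
Proof.
by case: u => x y; elim: t => [|t IHt]; rewrite ?mulr0 // mulrS IHt /= -add1n PoszD !mulrDr !mulr1.
Qed.

Definition in_quadrant (u : vec) : Prop := 0 <= u.1 /\ 0 <= u.2.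

Lemma det2_gt0_trans (u v w : vec) :
  in_quadrant u -> in_quadrant v -> in_quadrant w ->
  0 < det2 u v -> 0 < det2 v w -> 0 < det2 u w.
Proof.
move=> [u1 u2] [v1 v2] [w1 w2] duv dvw.
(* Sum the two coordinates of the Cramer identity; u <> 0 makes u.1 + u.2 positive. *)
have cramer_sum := congr1 (fun x : vec => x.1 + x.2) (det2_cramer u v w).
rewrite /= !fst_mulrz !snd_mulrz in cramer_sum.
have u_sum : 0 < u.1 + u.2.
  rewrite lt_def addr_ge0 // andbT; apply: contraTneq duv => u_sum0.
  have -> : u = 0 by apply: vecP => /=; lra.
  by rewrite /det2 /= !mul0r subrr ltxx.
have : 0 < (v.1 + v.2) * det2 u w.
  have -> : (v.1 + v.2) * det2 u w =
            (u.1 + u.2) * det2 v w + (w.1 + w.2) * det2 u v by lra.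
  have := mulr_gt0 u_sum dvw; have := mulr_ge0 (addr_ge0 w1 w2) (ltW duv); lra.
rewrite [0 < det2 u w]ltNge => prod_pos; apply/negP => /(mulr_ge0_le0 (addr_ge0 v1 v2)).
by rewrite leNgt prod_pos.
Qed.

Lemma sum_inter (s : seq vec) i N : (0 < i)%N ->
  \sum_(j < N) inter s j i =
    (if (i < N)%N then - selfint_coeff s i else 0)
    + (if (i.+1 < N)%N then 1 else 0) + (if (i.-1 < N)%N then 1 else 0).
Proof.
move=> i_gt0; elim: N => [|N IHN]; first by rewrite big_ord0.
rewrite big_ord_recr /= IHN /inter.
by repeat case: ifP; move=> *; lia.
Qed.

Lemma anticanonical_dotE (s : seq vec) i : (0 < i)%N -> (i.+1 < size s)%N ->
  anticanonical_dot s i = 2 - selfint_coeff s i.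
Proof. by move=> i_gt0 i_lt; rewrite /anticanonical_dot sum_inter // !ifT //; lia. Qed.

Lemma nef_anticanonicalE (s : seq vec) : nef_anticanonical s <->
  (forall i, (0 < i)%N -> (i.+1 < size s)%N -> selfint_coeff s i <= 2).
Proof.
split=> nef i i_gt0 i_lt; have := nef i i_gt0 i_lt;
  rewrite ?anticanonical_dotE //; lra.
Qed.

Definition adjacent (i j : nat) : bool := (i == j.+1) || (j == i.+1).

Lemma maxconeP (s : seq vec) (u w : vec) : maxcone s u w <->
  exists i j, [/\ (i < size s)%N, (j < size s)%N, adjacent i j,
                  u = ray s i & w = ray s j].
Proof.
split=> [[i [i_lt [[-> ->]|[-> ->]]]]|[i [j [i_lt j_lt ij -> ->]]]].
- by exists i, i.+1; split; rewrite /adjacent //; lia.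
- by exists i.+1, i; split; rewrite /adjacent //; lia.
case/orP: ij => /eqP ij; subst.
  by exists j; split => //; right.
by exists i; split => //; left.
Qed.

Lemma maxcone_rev (s : seq vec) (u w : vec) : maxcone (rev s) u w <-> maxcone s u w.
Proof.
rewrite !maxconeP size_rev.
have rev_idx i : (i < size s)%N -> ray (rev s) i = ray s (size s - i.+1).
  by move=> i_lt; rewrite /ray nth_rev.
split=> -[i [j [i_lt j_lt ij -> ->]]].
  exists (size s - i.+1)%N, (size s - j.+1)%N.
  by rewrite !rev_idx //; split => //; move: ij; rewrite /adjacent; lia.
exists (size s - i.+1)%N, (size s - j.+1)%N; rewrite !rev_idx; try lia.
have -> : (size s - (size s - i.+1).+1)%N = i by lia.
have -> : (size s - (size s - j.+1).+1)%N = j by lia.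
by split => //; move: ij; rewrite /adjacent; lia.
Qed.

Definition unimodular (a b c d : int) : Prop :=
  a * d - b * c = 1 \/ a * d - b * c = -1.

Lemma lin_inj a b c d : unimodular a b c d -> injective (lin a b c d).
Proof.
move=> det1 [u1 u2] [w1 w2] [e1 e2].
have det_neq0 : a * d - b * c != 0 by case: det1 => ->.
(* the adjugate matrix inverts lin up to the factor det = +-1 *)
have : (a * d - b * c) * (u1 - w1) = 0.
  have -> : (a * d - b * c) * (u1 - w1) =
    d * (a * u1 + b * u2 - (a * w1 + b * w2))
    - b * (c * u1 + d * u2 - (c * w1 + d * w2)) by ring.
  by rewrite e1 e2 !subrr !mulr0 subrr.
have : (a * d - b * c) * (u2 - w2) = 0.
  have -> : (a * d - b * c) * (u2 - w2) =
    a * (c * u1 + d * u2 - (c * w1 + d * w2))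
    - c * (a * u1 + b * u2 - (a * w1 + b * w2)) by ring.
  by rewrite e1 e2 !subrr !mulr0 subrr.
move=> /eqP; rewrite mulf_eq0 (negbTE det_neq0) subr_eq0 => /eqP ->.
by move=> /eqP; rewrite mulf_eq0 (negbTE det_neq0) subr_eq0 => /eqP ->.
Qed.

Lemma ray_map a b c d (s : seq vec) i : (i < size s)%N ->
  ray (map (lin a b c d) s) i = lin a b c d (ray s i).
Proof.
by move=> i_lt; rewrite /ray (nth_map (0, 0)) //; apply: set_nth_default; rewrite size_map.
Qed.

Lemma toric_iso_map a b c d (s : seq vec) :
  unimodular a b c d -> toric_iso s (map (lin a b c d) s).
Proof.
move=> det1; exists a, b, c, d; split=> // u w; rewrite !maxconeP size_map.
split=> -[i [j [i_lt j_lt ij eu ew]]]; exists i, j.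
  by rewrite !ray_map // eu ew.
by rewrite !ray_map // in eu ew; split => //; exact: (lin_inj det1).
Qed.

Lemma toric_iso_refl (s : seq vec) : toric_iso s s.
Proof.
have lin_id u : lin 1 0 0 1 u = u by apply: vecP; rewrite /lin /=; ring.
rewrite -{2}(map_id s) -(eq_map lin_id); apply: toric_iso_map; left; ring.
Qed.

Lemma toric_iso_rev (s t : seq vec) : toric_iso s t -> toric_iso s (rev t).
Proof.
move=> [a [b [c [d [det1 iso]]]]]; exists a, b, c, d; split=> // u w.
by rewrite maxcone_rev.
Qed.

Lemma lin_add a b c d (u w : vec) : lin a b c d (u + w) = lin a b c d u + lin a b c d w.
Proof. by apply: vecP; rewrite /lin /=; ring. Qed.

Lemma lin_mulrz a b c d (u : vec) m : lin a b c d (u *~ m) = lin a b c d u *~ m.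
Proof.
by apply: vecP; rewrite ?fst_mulrz ?snd_mulrz /lin /= ?fst_mulrz ?snd_mulrz; ring.
Qed.

Lemma lin_neq0 a b c d (u : vec) : unimodular a b c d -> u != 0 -> lin a b c d u != 0.
Proof.
move=> det1 u_neq0; apply: contra_neq u_neq0 => Lu0; apply: (lin_inj det1).
by rewrite Lu0; apply: vecP; rewrite /lin /= !mulr0 addr0.
Qed.

Lemma mulrz_vec_inj (x : vec) (m k : int) : x != 0 -> x *~ m = x *~ k -> m = k.
Proof.
case: x => x1 x2 x_neq0 /(congr1 (fun u : vec => (u.1, u.2))).
rewrite /= !fst_mulrz !snd_mulrz => -[e1 e2].
have [x1_0|x1_neq0] := eqVneq x1 0.
  have x2_neq0 : x2 != 0 by apply: contra_neq x_neq0 => x2_0; rewrite x1_0 x2_0.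
  exact: mulfI x2_neq0 _ _ e2.
exact: mulfI x1_neq0 _ _ e1.
Qed.

Definition fanZ_ray (m i : nat) : vec := if (i <= m)%N then (1, i%:Z) else e2.

Lemma size_fanZ m : size (fanZ m) = m.+2.
Proof. by rewrite /fanZ /= size_cat size_map size_iota addn1. Qed.

Lemma ray_fanZ m i : (i < m.+2)%N -> ray (fanZ m) i = fanZ_ray m i.
Proof.
rewrite /ray /fanZ_ray /fanZ; case: i => [|i] i_lt //=.
rewrite nth_cat size_map size_iota; case: ltnP => i_m.
  by rewrite (nth_map 0%N) ?size_iota // nth_iota // add1n ifT.
have -> : i = m by lia.
by rewrite subnn.
Qed.

Lemma smooth_fanA2 : smooth_quadrant_fan fanA2.
Proof.
split=> // i /= i_lt; last by have -> : i = 0%N by lia.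
by have [->|->] : i = 0%N \/ i = 1%N by lia.
Qed.

Lemma smooth_fanZ m : smooth_quadrant_fan (fanZ m).
Proof.
split; rewrite ?size_fanZ.
- by [].
- by rewrite ray_fanZ.
- by rewrite ray_fanZ // /fanZ_ray ltnn.
- by move=> i i_lt; rewrite ray_fanZ // /fanZ_ray; case: ifP.
move=> i i_lt; rewrite !ray_fanZ ?(ltnW i_lt) // /fanZ_ray /det2.
rewrite (_ : (i <= m)%N = true); last lia.
by case: (leqP i.+1 m) => i_m /=; lia.
Qed.

Lemma nef_fanA2 : nef_anticanonical fanA2.
Proof. by move=> i i_gt0 /= i_lt; lia. Qed.

Lemma nef_fanZ m : nef_anticanonical (fanZ m).
Proof.
apply/nef_anticanonicalE => i i_gt0; rewrite size_fanZ => i_lt.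
rewrite /selfint_coeff !ray_fanZ; try lia.
rewrite /fanZ_ray /det2 (_ : (i.-1 <= m)%N = true); last lia.
by case: leqP => i_m /=; lia.
Qed.

Definition neighbor_coeffs_le2 (t : seq vec) : Prop :=
  forall w x y, maxcone t w x -> maxcone t x y -> w <> y ->
  exists2 k : int, k <= 2 & w + y = x *~ k.

Section SmoothQuadrantFan.
Variable s : seq vec.
Hypothesis fan_s : smooth_quadrant_fan s.
Local Notation n := (size s).
Local Notation v := (ray s).
Local Notation a := (selfint_coeff s).

Lemma fan_size_gt1 : (1 < n)%N. Proof. by case: fan_s. Qed.
Lemma ray_first : v 0 = e1. Proof. by case: fan_s. Qed.
Lemma ray_last : v n.-1 = e2. Proof. by case: fan_s. Qed.

Lemma ray_quadrant i : (i < n)%N -> in_quadrant (v i).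
Proof. by case: fan_s => _ _ _ quad _; apply: quad. Qed.

Lemma det_ray_succ i : (i.+1 < n)%N -> det2 (v i) (v i.+1) = 1.
Proof. by case: fan_s => _ _ _ _ det1; apply: det1. Qed.

Lemma ray1_snd : (v 1).2 = 1.
Proof. by have := det_ray_succ fan_size_gt1; rewrite ray_first /det2 /= mul1r mul0r subr0. Qed.

Lemma det_ray_gt0 i j : (i < j)%N -> (j < n)%N -> 0 < det2 (v i) (v j).
Proof.
elim: j => // j IHj ij j_lt.
have [->|ij'] := eqVneq i j; first by rewrite det_ray_succ.
apply: (@det2_gt0_trans _ (v j)); rewrite ?det_ray_succ //.
- by apply: ray_quadrant; lia.
- by apply: ray_quadrant; lia.
- by apply: ray_quadrant.
- by apply: IHj; lia.
Qed.

Lemma ray_inj i j : (i < n)%N -> (j < n)%N -> v i = v j -> i = j.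
Proof.
move=> i_lt j_lt eij; apply/eqP; apply: contraT => /eqP ij.
suff : 0 < det2 (v i) (v i) by rewrite /det2 mulrC subrr ltxx.
have [lt_ij|lt_ji] : (i < j \/ j < i)%N by lia.
  by rewrite {2}eij det_ray_gt0.
by rewrite {1}eij det_ray_gt0.
Qed.

Lemma ray_neq0 i : (i < n)%N -> v i != 0.
Proof.
move=> i_lt; apply/eqP => vi0.
have [i0|i_gt0] := posnP i; first by move: vi0; rewrite i0 ray_first.
by have := @det_ray_succ i.-1; rewrite prednK // vi0 /det2 /= !mulr0 subrr => /(_ i_lt).
Qed.

Lemma selfint_coeff_gt0 i : (0 < i)%N -> (i.+1 < n)%N -> 0 < a i.
Proof. by move=> i_gt0 i_lt; apply: det_ray_gt0; lia. Qed.

Lemma ray_recurrence i : (0 < i)%N -> (i.+1 < n)%N -> v i.-1 + v i.+1 = v i *~ a i.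
Proof.
move=> i_gt0 i_lt; have := det2_cramer (v i.-1) (v i) (v i.+1).
have prev := @det_ray_succ i.-1; rewrite prednK // in prev.
by rewrite det_ray_succ // prev 1?ltnW // !mulr1z => ->.
Qed.

Lemma ray_step_unit i : (0 < i)%N -> (i.+1 < n)%N -> a i = 1 -> v i.+1 - v i = - v i.-1.
Proof.
move=> i_gt0 i_lt a1; have := ray_recurrence i_gt0 i_lt; rewrite a1 mulr1z => <-.
by rewrite opprD addrCA subrr addr0.
Qed.

Lemma ray_step_const p q : (p <= q)%N -> (q.+1 < n)%N ->
  (forall j, (p < j <= q)%N -> a j = 2) -> v q.+1 - v q = v p.+1 - v p.
Proof.
elim: q => [|q IHq] p_q q_lt a2; first by have -> : p = 0%N by lia.
have [->|p_le_q] := eqVneq p q.+1; first by [].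
rewrite -IHq; [|lia|lia|by move=> j j_p; apply: a2; lia].
have := (@ray_recurrence q.+1 isT q_lt); rewrite a2; last lia.
move=> rec; rewrite -[v q.+2](addKr (v q)) rec (_ : v q.+1 *~ 2 = v q.+1 + v q.+1) //.
ring.
Qed.

Lemma ray_arith_prog p t : (p + t < n)%N -> (forall j, (p < j < p + t)%N -> a j = 2) ->
  v (p + t) = v p + (v p.+1 - v p) *+ t.
Proof.
elim: t => [|t IHt] lt a2; first by rewrite addn0 mulr0n addr0.
rewrite mulrSr addrA -IHt; [|lia|by move=> j j_p; apply: a2; lia].
rewrite -(@ray_step_const p (p + t)) ?addnS; [|lia|lia|by move=> j j_p; apply: a2; lia].
by rewrite addrC subrK.
Qed.

Section NefFan.
Hypothesis a_le2 : forall i, (0 < i)%N -> (i.+1 < n)%N -> a i <= 2.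

Lemma neighbor_coeffs_le2_of_nef : neighbor_coeffs_le2 s.
Proof.
move=> w x y /maxconeP [p [q [p_lt q_lt pq -> ->]]].
move=> /maxconeP [q' [r [q'_lt r_lt qr /ray_inj eqq' ->]]] ray_pr.
rewrite -eqq' // in qr r_lt *.
have p_neq_r : p <> r by move=> epr; apply: ray_pr; rewrite epr.
move: pq qr; rewrite /adjacent => pq qr.
have q_gt0 : (0 < q)%N by lia.
have q_lt' : (q.+1 < n)%N by lia.
exists (a q); first exact: a_le2.
have [[-> ->]|[-> ->]] : (p = q.-1 /\ r = q.+1) \/ (p = q.+1 /\ r = q.-1) by lia.
  exact: ray_recurrence.
by rewrite addrC ray_recurrence.
Qed.

Lemma selfint_coeff_1or2 i : (0 < i)%N -> (i.+1 < n)%N -> a i = 1 \/ a i = 2.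
Proof.
move=> i_gt0 i_lt; have := a_le2 i_gt0 i_lt; have := selfint_coeff_gt0 i_gt0 i_lt.
lia.
Qed.

(* Two unit coefficients a p = a j = 1 with only 2's in between would give
   v j.+1 = - v p.-1, impossible for two nonzero vectors of the quadrant. *)
Lemma coeff_eq2_after_unit p : (0 < p)%N -> a p = 1 ->
  forall j, (p < j)%N -> (j.+1 < n)%N -> a j = 2.
Proof.
move=> p_gt0 ap1; elim/ltn_ind => j IHj p_j j_lt.
have [aj1|//] := selfint_coeff_1or2 (ltn_trans p_gt0 p_j) j_lt.
have p_lt : (p.+1 < n)%N by lia.
have step_j : v j - v j.-1 = - v p.-1.
  rewrite -{1}(prednK (ltn_trans p_gt0 p_j)) (@ray_step_const p j.-1); try lia.
    exact: ray_step_unit.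
  by move=> k k_p; apply: IHj; lia.
have next_j : v j.+1 = - v p.-1.
  by rewrite -step_j -(ray_step_unit (ltn_trans p_gt0 p_j) j_lt aj1) addrC subrK.
have [q1 q2] := ray_quadrant j_lt; rewrite next_j /= in q1 q2.
have [r1 r2] := @ray_quadrant p.-1 ltac:(lia).
suff vp0 : v p.-1 = 0 by have := @ray_neq0 p.-1 ltac:(lia); rewrite vp0 eqxx.
by apply: vecP => /=; lra.
Qed.

Lemma unit_coeff_exists : (2 < n)%N -> exists p, [/\ (0 < p)%N, (p.+1 < n)%N & a p = 1].
Proof.
move=> n_gt2; have [/hasP [p]|/hasPn no_unit] := boolP (has (fun p => a p == 1) (iota 1 (n - 2))).
  by rewrite mem_iota => p_range /eqP ap1; exists p; split => //; lia.
have all2 j : (0 < j)%N -> (j < n.-1)%N -> a j = 2.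
  move=> j_gt0 j_lt; have [aj1|//] := selfint_coeff_1or2 j_gt0 ltac:(lia).
  by have := no_unit j; rewrite mem_iota aj1 eqxx => /(_ ltac:(lia)).
have := @ray_arith_prog 0 n.-1 ltac:(lia) (fun j j_range => all2 j ltac:(lia) ltac:(lia)).
rewrite add0n ray_last ray_first mulrn_vec => /(congr1 snd) /=.
by rewrite ray1_snd; lia.
Qed.

Section UnitCoeff.
Variable p : nat.
Hypotheses (p_gt0 : (0 < p)%N) (p_lt : (p.+1 < n)%N) (ap1 : a p = 1).

Lemma coeff_eq2_before_unit j : (0 < j)%N -> (j < p)%N -> a j = 2.
Proof.
move=> j_gt0 j_p; have [aj1|//] := selfint_coeff_1or2 j_gt0 ltac:(lia).
by have := @coeff_eq2_after_unit j j_gt0 aj1 p j_p p_lt; rewrite ap1.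
Qed.

Lemma ray_before_unit i : (i <= p)%N -> v i = (1 + ((v 1).1 - 1) * i%:Z, i%:Z).
Proof.
move=> i_p; have := @ray_arith_prog 0 i ltac:(lia).
rewrite add0n ray_first => ->; last by move=> j j_range; apply: coeff_eq2_before_unit; lia.
by rewrite mulrn_vec; have := ray1_snd; case: (v 1) => k l /= ->; apply: vecP => /=; ring.
Qed.

Lemma ray_after_unit t : (p + t < n)%N -> v (p + t) = v p - v p.-1 *+ t.
Proof.
move=> pt_lt; rewrite ray_arith_prog //; last first.
  by move=> j j_range; apply: (coeff_eq2_after_unit p_gt0 ap1); lia.
by rewrite ray_step_unit // mulNrn.
Qed.

(* Reading the last ray e2 = v p - (n.-1 - p) v p.-1 off the second coordinate
   gives 1 = p - (n.-1 - p) (p - 1). *)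
Lemma unit_coeff_position : p = 1%N \/ p = n.-2.
Proof.
have := @ray_after_unit (n.-1 - p) ltac:(lia).
rewrite (_ : (p + _)%N = n.-1); last lia.
rewrite ray_last mulrn_vec (@ray_before_unit p (leqnn p)) (@ray_before_unit p.-1 (leq_pred p)).
move=> /(congr1 snd) /=; rewrite (_ : (p.-1)%:Z = p%:Z - 1); last lia.
move=> e2_snd; have : (p%:Z - 1) * ((n.-1 - p)%N%:Z - 1) = 0 by lra.
by move/eqP; rewrite mulf_eq0 !subr_eq0 => /orP[] /eqP; lia.
Qed.

Lemma fan_eq_fanZ_unit_last : p = n.-2 -> s = fanZ p.
Proof.
move=> p_last.
have k1 : (v 1).1 = 1.
  have := @ray_after_unit 1 ltac:(lia); rewrite addn1 (_ : p.+1 = n.-1) ?ray_last; last lia.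
  rewrite (@ray_before_unit p (leqnn p)) (@ray_before_unit p.-1 (leq_pred p)) mulr1n.
  move=> /(congr1 fst) /=; rewrite (_ : (p.-1)%:Z = p%:Z - 1); last lia.
  lra.
apply: (@eq_from_nth vec (0, 0)); first by rewrite size_fanZ; lia.
move=> i i_lt; rewrite -/(ray s i) -/(ray (fanZ p) i) ray_fanZ /fanZ_ray; last lia.
case: leqP => i_p; first by rewrite ray_before_unit // k1 subrr mul0r addr0.
by rewrite (_ : i = n.-1) ?ray_last //; lia.
Qed.

Lemma rev_swap_fan_eq_fanZ : p = 1%N -> rev (map (lin 0 1 1 0) s) = fanZ n.-2.
Proof.
move=> p1; have ray_tail t : (1 + t < n)%N -> v (1 + t) = ((v 1).1 - t%:Z, 1).
  move=> t_lt; have := @ray_after_unit t; rewrite p1 ray_first mulrn_vec => -> //.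
  by have := ray1_snd; case: (v 1) => k l /= ->; apply: vecP => /=; ring.
have k_eq : (v 1).1 = (n.-2)%:Z.
  have := ray_tail n.-2 ltac:(lia); rewrite (_ : (1 + n.-2)%N = n.-1); last lia.
  by rewrite ray_last => /(congr1 fst) /=; lra.
apply: (@eq_from_nth vec (0, 0)); first by rewrite size_rev size_map size_fanZ; lia.
rewrite size_rev size_map => i i_lt; rewrite nth_rev ?size_map // -/(ray _ _) ray_map; last lia.
rewrite -/(ray (fanZ _) i) ray_fanZ /fanZ_ray; last lia.
case: leqP => i_m.
  rewrite (_ : (n - i.+1)%N = (1 + (n.-2 - i))%N); last lia.
  by rewrite ray_tail ?k_eq; [apply: vecP; rewrite /lin /=; lia | lia].
rewrite (_ : (n - i.+1)%N = 0%N) ?ray_first //; lia.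
Qed.

End UnitCoeff.

Lemma nef_fan_classification :
  toric_iso s fanA2 \/ exists m, (1 <= m)%N /\ toric_iso s (fanZ m).
Proof.
have [n2|n_gt2] : n = 2%N \/ (2 < n)%N by have := fan_size_gt1; lia.
  left; suff -> : fanA2 = s by apply: toric_iso_refl.
  apply: (@eq_from_nth vec (0, 0)); first by rewrite n2.
  move=> i; rewrite [size fanA2]/= => i_lt; rewrite -/(ray s i).
  have [->|->] : i = 0%N \/ i = 1%N by lia.
    by rewrite ray_first.
  by have := ray_last; rewrite n2 => ->.
right; have [p [p_gt0 p_lt ap1]] := unit_coeff_exists n_gt2.
have [p1|p_last] := unit_coeff_position p_gt0 p_lt ap1.
  exists n.-2; split; first lia.
  rewrite -(rev_swap_fan_eq_fanZ p_gt0 p_lt ap1 p1).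
  by apply/toric_iso_rev/toric_iso_map; right.
exists p; split => //.
by rewrite -(fan_eq_fanZ_unit_last p_gt0 p_lt ap1 p_last); apply: toric_iso_refl.
Qed.

End NefFan.

End SmoothQuadrantFan.

Lemma toric_iso_nef (s t : seq vec) : smooth_quadrant_fan s -> smooth_quadrant_fan t ->
  nef_anticanonical t -> toric_iso s t -> nef_anticanonical s.
Proof.
move=> fan_s fan_t /nef_anticanonicalE /(neighbor_coeffs_le2_of_nef fan_t) t_le2.
move=> [a [b [c [d [det1 iso]]]]]; apply/nef_anticanonicalE.
move=> i i_gt0 i_lt; set L := lin a b c d.
have cone_prev : maxcone t (L (ray s i.-1)) (L (ray s i)).
  by apply/iso/maxconeP; exists i.-1, i; split; rewrite /adjacent //; lia.
have cone_next : maxcone t (L (ray s i)) (L (ray s i.+1)).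
  by apply/iso/maxconeP; exists i, i.+1; split; rewrite /adjacent //; lia.
have [|k k_le2 sum_k] := t_le2 _ _ _ cone_prev cone_next.
  move=> /(lin_inj det1) eq_rays; suff : i.-1 = i.+1 by lia.
  by apply: (ray_inj fan_s) => //; lia.
suff -> : selfint_coeff s i = k by [].
apply: (@mulrz_vec_inj (L (ray s i))).
  by apply: (lin_neq0 det1); apply: (ray_neq0 fan_s); lia.
by rewrite -sum_k /L -lin_mulrz -ray_recurrence // lin_add.
Qed.

Theorem lemma5p5 :
  smooth_quadrant_fan fanA2 /\
  (forall m : nat, (1 <= m)%N -> smooth_quadrant_fan (fanZ m)) /\
  (forall s : seq vec, smooth_quadrant_fan s ->
     (nef_anticanonical s <->
        (toric_iso s fanA2 \/
         exists m : nat, (1 <= m)%N /\ toric_iso s (fanZ m)))).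
Proof.
split; first exact: smooth_fanA2.
split=> [m _|s fan_s]; first exact: smooth_fanZ.
split=> [/nef_anticanonicalE nef_s|[iso|[m [_ iso]]]].
- exact: nef_fan_classification fan_s nef_s.
- exact: toric_iso_nef fan_s smooth_fanA2 nef_fanA2 iso.
- exact: toric_iso_nef fan_s (@smooth_fanZ m) (@nef_fanZ m) iso.
Qed.
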